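(* Let $X=(X_1,\ldots,X_p)^\top$ follow the linear structural equation model $$X_j = \Psi_j + \sum_{k \in \mathrm{PA}(j)} \theta_{j,k} X_k, \qquad j=1,\ldots,p,$$ as described in the context. Fix $j\in\{1,\ldots,p\}$ and a function $f:\mathbb{R}\to\mathbb{R}$, and let $$\beta^{f,j} := E(XX^\top)^{-1} E\{X f(X_j)\} \in \mathbb{R}^p$$ be the population ordinary least squares coefficient of the regression of $f(X_j)$ on all of $X$ (including $X_j$ itself); assume it exists. Then $$\beta^{f,j}_k = 0 \quad \text{for all } k \notin \mathrm{AN}(j)\cup\{j\}.$$
   Context: In the model, $\Psi_1,\ldots,\Psi_p$ are independent, centered random variables with $0<\mathrm{var}(\Psi_j)=\sigma_j^2<\infty$ for all $j$, so that the covariance matrix of $X$ exists and has full rank. The parent sets $\mathrm{PA}(j)\subseteq\{1,\ldots,p\}\setminus\{j\}$ are those of a directed acyclic graph (DAG) on $\{1,\ldots,p\}$ with edges $k\to j$ for $k\in\mathrm{PA}(j)$, and $\theta_{j,k}$ are real coefficients. $\mathrm{AN}(j)$ denotes the set of ancestors of $j$ in this DAG, i.e. the nodes with a directed path to $j$. *)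

From HB Require Import structures.
From mathcomp Require Import all_boot all_order all_algebra.
From mathcomp Require Import all_classical all_reals all_analysis.
Set Implicit Arguments. Unset Strict Implicit. Unset Printing Implicit Defensive.
Import Order.TTheory GRing.Theory Num.Theory.
Local Open Scope classical_set_scope.
Local Open Scope ring_scope.

Definition mutually_independent d (T : measurableType d) (R : realType)
  (P : probability T R) (p : nat) (Y : 'I_p -> T -> R) : Prop :=
  (forall i, measurable_fun setT (Y i)) /\
  forall (J : {set 'I_p}) (B : 'I_p -> set R),
    (forall i, measurable (B i)) ->
    P (\big[setI/setT]_(i in J) (Y i @^-1` B i)) =
    (\prod_(i in J) P (Y i @^-1` B i))%E.

(* The DAG given by parent sets: pa j k  <=>  k \in PA(j), i.e. edge k -> j. *)
Definition dag_edge (p : nat) (pa : 'I_p -> 'I_p -> bool) : rel 'I_p :=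
  fun k j => pa j k.

Definition acyclic (p : nat) (pa : 'I_p -> 'I_p -> bool) : Prop :=
  forall j k, dag_edge pa j k -> ~~ connect (dag_edge pa) k j.

Definition ancestor (p : nat) (pa : 'I_p -> 'I_p -> bool) (k j : 'I_p) : bool :=
  [exists i, dag_edge pa k i && connect (dag_edge pa) i j].

Definition second_moment d (T : measurableType d) (R : realType)
  (P : probability T R) (p : nat) (X : 'I_p -> T -> R) : 'M[R]_p :=
  \matrix_(k, l) fine ('E_P[X k \* X l]).

Definition cross_moment d (T : measurableType d) (R : realType)
  (P : probability T R) (p : nat) (X : 'I_p -> T -> R) (f : R -> R) (j : 'I_p)
  : 'cV[R]_p :=
  \col_k fine ('E_P[X k \* (f \o X j)]).

Definition ols_coef d (T : measurableType d) (R : realType)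
  (P : probability T R) (p : nat) (X : 'I_p -> T -> R) (f : R -> R) (j : 'I_p)
  : 'cV[R]_p :=
  invmx (second_moment P X) *m cross_moment P X f j.

From HB Require Import structures.
From mathcomp Require Import all_boot all_order all_algebra.
From mathcomp Require Import all_classical all_reals all_analysis.
From mathcomp Require Import measurable_realfun.
Import Order.TTheory GRing.Theory Num.Theory.
Local Open Scope classical_set_scope.
Local Open Scope ring_scope.

Set Implicit Arguments. Unset Strict Implicit. Unset Printing Implicit Defensive.

(* Write M = I - Theta for the coefficient matrix of the model, so that the
   noise is Psi = M X.  By independence E(Psi Psi^T) = D is diagonal with
   positive entries, and it equals M E(X X^T) M^T; hence
   E(X X^T)^-1 = M^T D^-1 M and beta = M^T D^-1 e with e_i = E(Psi_i f(X_j)).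
   If i is neither j nor an ancestor of j, then X_j is measurable with respect
   to the Psi_a with a <> i (induction along the DAG), so Psi_i is independent
   of f(X_j) and e_i = 0.  If i is j or an ancestor of j and k is not, then
   M_ik = 0, since a parent of an ancestor is an ancestor.  So every term of
   beta_k = sum_i M_ik e_i / D_i vanishes. *)

Section Ancestors.
Variables (p : nat) (pa : 'I_p -> 'I_p -> bool).

Lemma ancestor_parent m k : pa m k -> ancestor pa k m.
Proof. by move=> pmk; apply/existsP; exists m; rewrite /dag_edge pmk connect0. Qed.

Lemma ancestor_trans i k m : ancestor pa i k -> ancestor pa k m -> ancestor pa i m.
Proof.
move=> /existsP[x /andP[ix xk]] /existsP[y /andP[ky ym]].
apply/existsP; exists x; rewrite ix /=.
exact: connect_trans xk (connect_trans (connect1 ky) ym).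
Qed.

Lemma ancestor_parent_closed i j k :
  ancestor pa i j || (i == j) -> pa i k -> ancestor pa k j.
Proof.
move=> /orP[ij|/eqP <-] pik; last exact: ancestor_parent.
exact: ancestor_trans (ancestor_parent pik) ij.
Qed.

Hypothesis pa_acyclic : acyclic pa.

Lemma card_ancestors_lt m k : pa m k ->
  (#|[set i | ancestor pa i k]%SET| < #|[set i | ancestor pa i m]%SET|)%N.
Proof.
move=> pmk; apply: proper_card; apply/fintype.properP; split.
  apply/fintype.subsetP => i; rewrite !inE => /ancestor_trans; apply.
  exact: ancestor_parent.
exists k; rewrite !inE; first exact: ancestor_parent.
by apply/negP => /existsP[x /andP[kx xk]]; have := pa_acyclic kx; rewrite xk.
Qed.

Lemma acyclic_ind (Q : 'I_p -> Prop) :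
  (forall m, (forall k, pa m k -> Q k) -> Q m) -> forall m, Q m.
Proof.
move=> IH m; have [n] := ubnP #|[set i | ancestor pa i m]%SET|.
elim: n m => // n IHn m lt_m; apply: IH => k pmk; apply: IHn.
exact: leq_trans (card_ancestors_lt pmk) _.
Qed.

End Ancestors.

Lemma congr_diag_invmx_mul (F : fieldType) n (M S : 'M[F]_n) (D : 'I_n -> F)
    (c : 'cV[F]_n) :
  (forall i, D i != 0) -> M *m S *m M^T = diag_mx (\row_i D i) ->
  invmx S *m c = M^T *m diag_mx (\row_i (D i)^-1) *m (M *m c).
Proof.
move=> D_neq0 MSM; set Dinv := diag_mx _.
have DDinv : diag_mx (\row_i D i) *m Dinv = 1%:M.
  apply/matrixP => a b; rewrite mul_diag_mx !mxE.
  by case: eqP => [->|_]; rewrite ?mulr1n ?mulfV ?mulr0n ?mulr0.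
have SQ : S *m (M^T *m Dinv *m M) = 1%:M.
  rewrite !mulmxA; apply: mulmx1C.
  by rewrite !mulmxA MSM DDinv.
rewrite -{1}[c]mul1mx -SQ -mulmxA mulKmx ?mulmxA //.
exact: (mulmx1_unit SQ).1.
Qed.

Section Moments.
Context d (T : measurableType d) (R : realType) (P : probability T R).

Lemma sqr_integrable_Lfun2 (Y : T -> R) : measurable_fun setT Y ->
  P.-integrable setT (EFin \o (Y ^+ 2)) -> Y \in Lfun P 2%:E.
Proof.
move=> mY /integrableP[_ iY2]; rewrite inE; apply/andP; split; rewrite inE //=.
rewrite /finite_norm unlock /Lnorm poweR_lty //.
apply: le_lt_trans iY2; rewrite le_eqVlt; apply/predU1P; left.
apply: eq_integral => w _.
by rewrite /= powR_mulrn // real_normK ?num_real // ger0_norm //; exact: sqr_ge0.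
Qed.

Section FiniteCombination.
Variables (I : finType) (c : I -> R) (Y : I -> T -> R) (Z : T -> R).

Lemma sumZ_mul_fun :
  (\sum_i c i \o* Y i) \* Z = \sum_i c i \o* (Y i \* Z).
Proof.
apply/funext => w; rewrite !fct_sumE /= mulr_suml.
by apply: eq_bigr => i _; rewrite mulrAC.
Qed.

Hypothesis YZ_L1 : forall i, Y i \* Z \in Lfun P 1.

Lemma sumZ_mul_Lfun1 : (\sum_i c i \o* Y i) \* Z \in Lfun P 1.
Proof. by rewrite sumZ_mul_fun rpred_sum // => i _; apply: Lfun_scale. Qed.

Lemma expectation_sumZ_mul :
  fine 'E_P[(\sum_i c i \o* Y i) \* Z] = \sum_i c i * fine 'E_P[Y i \* Z].
Proof.
have := @expectation_sum _ _ _ P [seq c i \o* (Y i \* Z) | i <- index_enum I].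
rewrite sumZ_mul_fun !big_map => -> => [|_ /mapP[i _ ->]]; last exact: Lfun_scale.
rewrite -sum_fine => [|i _]; last first.
  by rewrite expectationZl // fin_numM // expectation_fin_num.
by apply: eq_bigr => i _; rewrite expectationZl // fineM // expectation_fin_num.
Qed.

End FiniteCombination.

Lemma mul_fun_comm (U V : T -> R) : U \* V = V \* U.
Proof. by apply/funext => w; rewrite /= mulrC. Qed.

Section LinearImage.
Variables (p : nat) (A : 'M[R]_p) (X Y : 'I_p -> T -> R).
Hypothesis Y_lin : forall a, Y a = \sum_m A a m \o* X m.

Lemma moment_col_lin (Z : T -> R) : (forall m, X m \* Z \in Lfun P 1) ->
  \col_a fine 'E_P[Y a \* Z] = A *m \col_m fine 'E_P[X m \* Z].
Proof.
move=> XZ1; apply/colP => a; rewrite !mxE Y_lin expectation_sumZ_mul //.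
by apply: eq_bigr => m _; rewrite mxE.
Qed.

Hypothesis X_L2 : forall m, X m \in Lfun P 2%:E.

Lemma Lfun2_lin a : Y a \in Lfun P 2%:E.
Proof.
(* the submodule structure of [Lfun P 2%:E] used by [rpred_sum] needs [1 <= 2] *)
have two_ge1 : (1 <= 2%:E :> \bar R)%E by rewrite lee1n.
by rewrite Y_lin rpred_sum // => m _; apply: Lfun_scale.
Qed.

Lemma second_moment_lin : second_moment P Y = A *m second_moment P X *m A^T.
Proof.
apply/matrixP => a b; rewrite -mulmxA !mxE.
have := congr1 (fun v : 'cV_p => v a 0) (moment_col_lin (Z := Y b) _).
rewrite !mxE => -> => [|m]; last exact: Lfun2_mul_Lfun1 (X_L2 m) (Lfun2_lin b).
apply: eq_bigr => m _; rewrite !mxE; congr (_ * _).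
rewrite mul_fun_comm Y_lin expectation_sumZ_mul => [|n]; last exact: Lfun2_mul_Lfun1.
by apply: eq_bigr => n _; rewrite !mxE mulrC mul_fun_comm.
Qed.

End LinearImage.
End Moments.

Section Independence.
Local Open Scope ereal_scope.
Context d (T : measurableType d) (R : realType) (P : probability T R).

Lemma indep_event_g_sigma (E : set T) (G : set (set T)) :
  measurable E -> setI_closed G -> G `<=` measurable ->
  (forall A, G A -> P (E `&` A) = P E * P A) ->
  forall A, <<s G >> A -> P (E `&` A) = P E * P A.
Proof.
move=> mE GI Gm GP.
set H := [set A | measurable A /\ P (E `&` A) = P E * P A].
suff: <<s G >> `<=` H by move=> sGH A /sGH[].
have finP (A : set T) : measurable A -> P A \is a fin_num by exact: fin_num_measure.
have ltP (A : set T) : measurable A -> P A < +oo.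
  by move=> mA; rewrite ltey_eq finP.
apply: lambda_system_subset => //; last by move=> A GA; split; [exact: Gm|exact: GP].
split => //.
- by split => //; rewrite setIT probability_setT mule1.
- move=> A B BA [mA PA] [mB PB]; split; first exact: measurableD.
  have mEA : measurable (E `&` A) by exact: measurableI.
  rewrite setIDA !measureD ?ltP // -setIA !(setIidr BA).
  transitivity (P E * P A - P E * P B); first by rewrite -PA -PB.
  by rewrite muleBr ?finP // fin_num_adde_defl // fin_numN finP.
- move=> F ndF HF; split.
    by apply: bigcupT_measurable => i; case: (HF i).
  have mF i : measurable (F i) by case: (HF i).
  have ndEF : nondecreasing_seq (fun i => E `&` F i).
    by move=> m n mn; rewrite subsetEset; apply: setIS; rewrite -subsetEset ndF.
  have mEF i : measurable (E `&` F i) by exact: measurableI.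
  have PEF : P \o (fun i => E `&` F i) @ \oo --> P E * P (\bigcup_i F i).
    have -> : P \o (fun i => E `&` F i) = (fun i => P E * (P \o F) i).
      by apply/funext => i /=; case: (HF i).
    apply: cvgeZl; first exact: finP.
    exact: nondecreasing_cvg_mu (bigcupT_measurable _ mF) ndF.
  rewrite setI_bigcupr.
  exact: cvg_unique _ (nondecreasing_cvg_mu mEF (bigcupT_measurable _ mEF) ndEF) PEF.
Qed.

Definition indep_rv (Y Z : T -> R) := forall A B, measurable A -> measurable B ->
  P (Y @^-1` A `&` Z @^-1` B) = P (Y @^-1` A) * P (Z @^-1` B).

Lemma distribution_pair_indep (Y Z : {mfun T >-> R})
    (W : {mfun T >-> (R * R)%type}) :
  (forall w, W w = (Y w, Z w)) -> indep_rv Y Z ->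
  forall C, measurable C ->
    distribution P W C = (distribution P Y \x distribution P Z) C.
Proof.
move=> WE YZ.
apply: (measure_unique [set A `*` B | A in measurable & B in measurable]
  (fun _ => setT)).
- exact: measurable_prod_measurableType.
- move=> _ _ [A1 mA1 [B1 mB1 <-]] [A2 mA2 [B2 mB2 <-]].
  rewrite -setXI; exists (A1 `&` A2); first exact: measurableI.
  by exists (B1 `&` B2) => //; exact: measurableI.
- by move=> _; exists setT => //; exists setT => //; rewrite setXTT.
- by apply/seteqP; split => // x _; exists 0%N.
- move=> _ [A mA [B mB <-]].
  transitivity (distribution P Y A * distribution P Z B).
    transitivity (P (W @^-1` (A `*` B))) => //.
    by rewrite -YZ //; apply: congr1; apply/seteqP; split => w /=; rewrite WE.
  exact/esym/product_measure1E.
- by move=> _; rewrite -ge0_fin_numE ?fin_num_measure.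
Qed.

Lemma expectation_mul_indep_eq0 (Y Z : T -> R) :
  measurable_fun setT Y -> measurable_fun setT Z -> indep_rv Y Z ->
  Y \in Lfun P 1 -> 'E_P[Y] = 0 -> (Y \* Z)%R \in Lfun P 1 ->
  'E_P[Y \* Z] = 0.
Proof.
move=> mYf mZf YZ /Lfun1_integrable iY EY /Lfun1_integrable iYZ.
pose mY : {mfun T >-> R} := HB.pack Y (isMeasurableFun.Build _ _ _ _ Y mYf).
pose mZ : {mfun T >-> R} := HB.pack Z (isMeasurableFun.Build _ _ _ _ Z mZf).
pose W w := (Y w, Z w).
have mWf : measurable_fun setT W by exact: measurable_fun_pair.
pose mW : {mfun T >-> (R * R)%type} := HB.pack W (isMeasurableFun.Build _ _ _ _ W mWf).
pose mu := distribution P mY; pose nu := distribution P mZ.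
have WE := @distribution_pair_indep mY mZ mW (fun w => erefl) YZ.
pose g := fun z : (R * R)%type => (z.1 * z.2)%:E.
have mg : measurable_fun setT g.
  by apply/measurable_EFinP; apply: measurable_funM.
have EJ : 'E_P[Y \* Z] = \int[mu \x nu]_z g z.
  rewrite (eq_measure_integral (distribution P mW)) => [|A mA _]; last exact/esym/WE.
  by rewrite unlock integral_pushforward.
have imunu : (mu \x nu).-integrable setT g.
  have /integrableP[_ iJ] : (distribution P mW).-integrable setT g.
    by apply: integrable_pushforward => //; rewrite preimage_setT.
  apply/integrableP; split => //.
  by rewrite (eq_measure_integral (distribution P mW)) // => A mA _; exact/esym/WE.
have imu : mu.-integrable setT (EFin \o id).
  by apply: integrable_pushforward => //; apply/measurable_EFinP.
have Emu : \int[mu]_x x%:E = 0.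
  by rewrite integral_pushforward //= -EY unlock.
(* Fubini: integrate out the first coordinate, whose law is centered. *)
rewrite EJ -integral21_prod_meas1 // /fubini_G -[RHS](integral0 nu setT).
apply: eq_integral => y _; under eq_integral do rewrite /g EFinM.
by rewrite integralZr // Emu mul0e.
Qed.

End Independence.

Section Others.
Local Open Scope ereal_scope.
Context d (T : measurableType d) (R : realType) (P : probability T R).
Variables (p : nat) (Psi : 'I_p -> T -> R).

Definition others_pi (l : 'I_p) : set (set T) :=
  [set C | exists B : 'I_p -> set R, (forall i, measurable (B i)) /\
     C = \big[setI/setT]_(i | i != l) (Psi i @^-1` B i)].

Lemma others_pi_setI_closed l : setI_closed (others_pi l).
Proof.
move=> _ _ [B1 [mB1 ->]] [B2 [mB2 ->]].
exists (fun i => B1 i `&` B2 i); split; first by move=> i; exact: measurableI.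
by rewrite -big_split /=; apply: eq_bigr => i _; rewrite preimage_setI.
Qed.

Lemma measurable_others l i : i != l ->
  measurable_fun [set: g_sigma_algebraType (others_pi l)] (Psi i).
Proof.
move=> il _ B mB; rewrite setTI; apply: sub_sigma_algebra.
exists (fun k => if k == i then B else setT); split; first by move=> k; case: ifP.
rewrite (bigD1 i) //= eqxx big1 ?setIT // => k /andP[_ ki].
by rewrite (negbTE ki) preimage_setT.
Qed.

Hypothesis Psi_indep : mutually_independent P Psi.

Lemma others_pi_measurable l : others_pi l `<=` measurable.
Proof.
move=> _ [B [mB ->]]; apply: big_ind => //; first by move=> *; exact: measurableI.
by move=> i _; rewrite -[X in measurable X]setTI; apply: Psi_indep.1.
Qed.

Lemma others_pi_indep l (A : set R) : measurable A ->
  forall C, others_pi l C -> P (Psi l @^-1` A `&` C) = P (Psi l @^-1` A) * P C.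
Proof.
move=> mA _ [B [mB ->]].
pose B' i := if i == l then A else B i.
have mB' i : measurable (B' i) by rewrite /B'; case: ifP.
have e1 : \big[setI/setT]_(i in [set: 'I_p]%SET) (Psi i @^-1` B' i) =
    Psi l @^-1` A `&` \big[setI/setT]_(i | i != l) (Psi i @^-1` B i).
  rewrite (bigD1 l) ?inE //= /B' eqxx; congr (_ `&` _).
  by apply: eq_big => [i|i /andP[_ il]]; rewrite ?inE ?(negbTE il).
have e2 : \big[setI/setT]_(i in [set i | i != l]%SET) (Psi i @^-1` B i) =
    \big[setI/setT]_(i | i != l) (Psi i @^-1` B i).
  by apply: eq_bigl => i; rewrite inE.
rewrite -e1 -e2 (Psi_indep.2 _ _ mB') (Psi_indep.2 _ _ mB) (bigD1 l) ?inE //= /B' eqxx.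
by congr (_ * _); apply: eq_big => [i|i /andP[_ il]]; rewrite ?inE ?(negbTE il).
Qed.

Lemma expectation_mul_others_eq0 l (h : T -> R) :
  measurable_fun [set: g_sigma_algebraType (others_pi l)] h ->
  Psi l \in Lfun P 1 -> 'E_P[Psi l] = 0 -> (Psi l \* h)%R \in Lfun P 1 ->
  'E_P[Psi l \* h] = 0.
Proof.
move=> mh Psil_L1 Psil_centered Psih_L1.
have h_others B : measurable B -> <<s others_pi l >> (h @^-1` B).
  by move=> mB; rewrite -[h @^-1` B]setTI; apply: mh.
have others_measurable : <<s others_pi l >> `<=` measurable.
  by apply: smallest_sub; [exact: sigma_algebra_measurable|exact: others_pi_measurable].
apply: expectation_mul_indep_eq0 => //; first exact: Psi_indep.1.
  by move=> _ B mB; rewrite setTI; apply: others_measurable; apply: h_others.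
move=> A B mA mB; apply: (indep_event_g_sigma (G := others_pi l)) => //.
- by rewrite -[X in measurable X]setTI; apply: Psi_indep.1.
- exact: others_pi_setI_closed.
- exact: others_pi_measurable.
- exact: others_pi_indep.
- exact: h_others.
Qed.

End Others.

Definition coef_mx (R : nzRingType) p (pa : 'I_p -> 'I_p -> bool)
    (theta : 'I_p -> 'I_p -> R) : 'M[R]_p :=
  \matrix_(i, k) (if pa i k then theta i k else 0).

Section LinearSEM.
Context d (T : measurableType d) (R : realType) (P : probability T R).
Variables (p : nat) (Psi : 'I_p -> T -> R) (pa : 'I_p -> 'I_p -> bool).
Variables (theta : 'I_p -> 'I_p -> R) (X : 'I_p -> T -> R).
Hypothesis X_sem : forall i w, X i w = Psi i w + \sum_(k | pa i k) theta i k * X k w.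

Local Notation M := (1%:M - coef_mx pa theta).

Lemma sem_fun i : X i = Psi i + \sum_(k | pa i k) theta i k \o* X k.
Proof.
apply/funext => w; rewrite X_sem /= fct_sumE; congr (_ + _).
by apply: eq_bigr => k _; rewrite mulrC.
Qed.

Lemma noise_lin a : Psi a = \sum_m M a m \o* X m.
Proof.
apply/funext => w; rewrite fct_sumE /=.
under eq_bigr do rewrite !mxE mulrBr.
rewrite sumrB (bigD1 a) //= eqxx mulr1 big1 ?addr0 => [|m /negbTE]; last first.
  by rewrite eq_sym => ->; rewrite mulr0.
suff -> : \sum_m X m w * (if pa a m then theta a m else 0) =
    \sum_(k | pa a k) theta a k * X k w by rewrite X_sem addrK.
by rewrite [RHS]big_mkcond; apply: eq_bigr => m _; case: ifP; rewrite ?mulr0 // mulrC.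
Qed.

Hypothesis pa_acyclic : acyclic pa.
Hypothesis Psi_indep : mutually_independent P Psi.

Lemma sem_measurable_others i m : ~~ ancestor pa i m -> m != i ->
  measurable_fun [set: g_sigma_algebraType (others_pi Psi i)] (X m).
Proof.
elim/(acyclic_ind pa_acyclic): m => m IH im mi; rewrite sem_fun.
apply: measurable_funD; first exact: measurable_others.
rewrite big_mkcond fct_sumE; apply: measurable_sum => k; case: ifP => pmk.
  apply: measurable_funM => //; apply: IH => //.
    by apply: contra im => /ancestor_trans; apply; exact: ancestor_parent.
  by apply: contraNneq im => ki; rewrite -ki ancestor_parent.
exact: measurable_cst.
Qed.

Hypothesis Psi_sqr_integrable : forall i, P.-integrable setT (EFin \o (Psi i ^+ 2)).

Lemma noise_Lfun2 i : Psi i \in Lfun P 2%:E.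
Proof. exact: sqr_integrable_Lfun2 (Psi_indep.1 i) (Psi_sqr_integrable i). Qed.

Lemma sem_Lfun2 m : X m \in Lfun P 2%:E.
Proof.
have two_ge1 : (1 <= 2%:E :> \bar R)%E by rewrite lee1n.
elim/(acyclic_ind pa_acyclic): m => m IH; rewrite sem_fun rpredD ?noise_Lfun2 //.
by rewrite rpred_sum // => k pmk; apply/Lfun_scale/IH.
Qed.

Lemma noise_Lfun1 i : Psi i \in Lfun P 1.
Proof. by apply: Lfun_subset12 (noise_Lfun2 i); apply: fin_num_measure. Qed.

Hypothesis Psi_centered : forall i, ('E_P[Psi i] = 0)%E.

Lemma noise_second_moment :
  second_moment P Psi = diag_mx (\row_a fine 'E_P[Psi a \* Psi a]).
Proof.
apply/matrixP => a b; rewrite !mxE; case: eqVneq => [->|ab]; first by rewrite mulr1n.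
rewrite mulr0n expectation_mul_others_eq0 //.
- by apply: measurable_others; rewrite eq_sym.
- exact: noise_Lfun1.
- exact: Lfun2_mul_Lfun1 (noise_Lfun2 a) (noise_Lfun2 b).
Qed.

Lemma noise_moment_gt0 a : (0 < 'V_P[Psi a])%E -> 0 < fine 'E_P[Psi a \* Psi a].
Proof.
have sqr0 : ((0 : \bar R) ^+ 2 = 0)%E by apply/eqP; rewrite expe_eq0 eqxx.
rewrite varianceE ?noise_Lfun2 // Psi_centered sqr0 sube0 => var_gt0.
rewrite fine_gt0 // var_gt0 /= ltey_eq expectation_fin_num //.
exact: Lfun2_mul_Lfun1 (noise_Lfun2 a) (noise_Lfun2 a).
Qed.

Variables (f : R -> R) (j : 'I_p).
Hypothesis f_measurable : measurable_fun setT f.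
Hypothesis Xf_integrable : forall k, P.-integrable setT (EFin \o (X k \* (f \o X j))).

Lemma noise_cross_moment_eq0 i : ~~ ancestor pa i j -> j != i ->
  fine 'E_P[Psi i \* (f \o X j)] = 0.
Proof.
move=> ij ji; rewrite expectation_mul_others_eq0 ?noise_Lfun1 //.
  exact: measurableT_comp f_measurable (sem_measurable_others ij ji).
by rewrite noise_lin; apply: sumZ_mul_Lfun1 => m; apply/Lfun1_integrable.
Qed.

Lemma ols_coef_sem : (forall a, 0 < 'V_P[Psi a])%E ->
  ols_coef P X f j = M^T *m diag_mx (\row_a (fine 'E_P[Psi a \* Psi a])^-1)
                       *m \col_a fine 'E_P[Psi a \* (f \o X j)].
Proof.
move=> var_gt0; rewrite /ols_coef.
rewrite (congr_diag_invmx_mul (M := M) (D := fun a => fine 'E_P[Psi a \* Psi a])).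
- by rewrite (moment_col_lin noise_lin) // => m; apply/Lfun1_integrable.
- by move=> a; rewrite gt_eqF // noise_moment_gt0.
- by rewrite -(second_moment_lin noise_lin) ?noise_second_moment //; exact: sem_Lfun2.
Qed.

End LinearSEM.

Unset Implicit Arguments.

Theorem theorem1 (d : measure_display) (T : measurableType d) (R : realType)
  (P : probability T R) (p : nat)
  (Psi : 'I_p -> T -> R) (pa : 'I_p -> 'I_p -> bool) (theta : 'I_p -> 'I_p -> R)
  (X : 'I_p -> T -> R) (f : R -> R) (j : 'I_p) :
  mutually_independent P Psi ->
  (forall i, P.-integrable setT (EFin \o Psi i)) ->
  (forall i, P.-integrable setT (EFin \o (Psi i ^+ 2))) ->
  (forall i, ('E_P[Psi i] = 0)%E) ->
  (forall i, (0 < 'V_P[Psi i])%E) ->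
  acyclic pa ->
  (forall i w, X i w = Psi i w + \sum_(k | pa i k) theta i k * X k w) ->
  measurable_fun setT f ->
  (forall k, P.-integrable setT (EFin \o (X k \* (f \o X j)))) ->
  forall k : 'I_p, ~~ ancestor pa k j -> k != j ->
    ols_coef P X f j k ord0 = 0.
Proof.
(* integrability of [Psi i] already follows from its square integrability *)
move=> Psi_indep _ Psi_sqr Psi_centered var_gt0 pa_acyclic X_sem f_meas Xf_int.
move=> k kj_anc kj.
have e_eq0 := noise_cross_moment_eq0 X_sem pa_acyclic Psi_indep Psi_sqr
  Psi_centered f_meas Xf_int.
rewrite (ols_coef_sem X_sem pa_acyclic Psi_indep Psi_sqr Psi_centered Xf_int var_gt0).
rewrite mul_mx_diag !mxE big1 // => i _; rewrite !mxE.
have [ij|] := boolP (ancestor pa i j || (i == j)); last first.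
  by rewrite negb_or => /andP[ij ji]; rewrite e_eq0 ?mulr0 // eq_sym.
have ik : (i == k) = false.
  by apply: contraTF ij => /eqP ->; rewrite negb_or kj_anc.
have pik : pa i k = false.
  by apply: contraNF kj_anc; apply: ancestor_parent_closed.
by rewrite ik pik subrr !mul0r.
Qed.
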